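(* Let $V$ be an $n$-dimensional Euclidean space, $1\le p\le n$, let $\theta$ be a quadratic form on $V$ and $\tau=\tau_i\omega^i\in V^*$ a $1$-form such that $\theta-\tau\otimes\tau$ is $p$-positive semi-definite. Then for every $(p-1)$-form $\xi$ on $V$ one has $\tau\wedge\xi\in\mathrm{Im}F_\theta$ (with $F_\theta$ acting on $p$-forms), and for every $p$-form $f\in\mathrm{Im}F_\theta$, $$\langle F_\theta^{-1}f,\tau\wedge\xi\rangle\le\langle F_\theta^{-1}f,f\rangle^{1/2}|\xi| .$$ In particular $\langle F_\theta^{-1}(\tau\wedge\xi),\tau\wedge\xi\rangle\le|\xi|^2$.
   Context: Let $e_1,\dots,e_n$ be an orthonormal basis of $V$ with dual basis $\omega^1,\dots,\omega^n$; summation over repeated indices. A quadratic form (symmetric bilinear form) $\theta=\theta_{ij}\omega^i\otimes\omega^j$ is called $p$-positive definite (resp. $p$-positive semi-definite) if the sum of any $p$ of the eigenvalues of the symmetric matrix $(\theta_{ij})$ (counted with multiplicity) is positive (resp. nonnegative). For such $\theta$, $F_\theta$ denotes the self-adjoint operator on $p$-forms $F_\theta g=\theta_{jk}\,\omega^k\wedge(e_j\lrcorner g)$, where $\lrcorner$ is interior product. For a self-adjoint operator $F$ on $\Lambda^pV^*$ one has $\Lambda^pV^*=\ker F\oplus\mathrm{Im}F$, and $F^{-1}$ denotes $(F|_{\mathrm{Im}F})^{-1}:\mathrm{Im}F\to\mathrm{Im}F$ ($F$ need not be invertible). *)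

(* Exterior algebra of V = R^n (standard orthonormal basis),
   coefficients w.r.t. the basis omega^S = omega^{s1} /\ ... /\ omega^{sk},
   s1 < ... < sk, indexed by subsets S of 'I_n. *)
From HB Require Import structures.
From mathcomp Require Import all_boot all_order all_algebra.
Set Implicit Arguments. Unset Strict Implicit. Unset Printing Implicit Defensive.
Import Order.TTheory GRing.Theory Num.Theory.
Local Open Scope ring_scope.

Definition extform (R : rcfType) (n : nat) := {ffun {set 'I_n} -> R}.

Definition is_pform (R : rcfType) (n p : nat) (f : extform R n) : Prop :=
  forall S : {set 'I_n}, #|S| != p -> f S = 0.

Definition sgn_before (R : rcfType) (n : nat) (S : {set 'I_n}) (k : 'I_n) : R :=
  (-1) ^+ #|[set i in S | (i < k)%N]|.

Definition wedge1 (R : rcfType) (n : nat) (k : 'I_n) (g : extform R n) : extform R n :=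
  [ffun S : {set 'I_n} => if k \in S then sgn_before R S k * g (S :\ k) else 0].

Definition interior (R : rcfType) (n : nat) (j : 'I_n) (g : extform R n) : extform R n :=
  [ffun S : {set 'I_n} => if j \in S then 0 else sgn_before R S j * g (j |: S)].

Definition wedge_tau (R : rcfType) (n : nat) (tau : 'rV[R]_n) (g : extform R n)
  : extform R n :=
  [ffun S : {set 'I_n} => \sum_(k < n) tau 0 k * wedge1 k g S].

Definition Ftheta (R : rcfType) (n : nat) (A : 'M[R]_n) (g : extform R n) : extform R n :=
  [ffun S : {set 'I_n} => \sum_(j < n) \sum_(k < n) A j k * wedge1 k (interior j g) S].

Definition inner (R : rcfType) (n : nat) (f g : extform R n) : R :=
  \sum_(S : {set 'I_n}) f S * g S.

Definition fnorm (R : rcfType) (n : nat) (f : extform R n) : R :=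
  Num.sqrt (inner f f).

Definition in_ImF (R : rcfType) (n p : nat) (A : 'M[R]_n) (f : extform R n) : Prop :=
  is_pform p f /\ exists g : extform R n, is_pform p g /\ Ftheta A g = f.

Definition eigenvalue_list (R : rcfType) (n : nat) (A : 'M[R]_n)
  (t : 'I_n -> R) : Prop :=
  char_poly A = \prod_(i < n) ('X - (t i)%:P).

Definition p_psd (R : rcfType) (n p : nat) (A : 'M[R]_n) : Prop :=
  A^T = A /\
  forall t : 'I_n -> R, eigenvalue_list A t ->
  forall I : {set 'I_n}, #|I| = p -> 0 <= \sum_(i in I) t i.

From HB Require Import structures.
From mathcomp Require Import all_boot all_order all_algebra.
From mathcomp Require Import ring lra.
From mathcomp.real_closed Require Import complex.
Import Order.TTheory GRing.Theory Num.Theory.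
Local Open Scope ring_scope.
Set Implicit Arguments. Unset Strict Implicit. Unset Printing Implicit Defensive.

(* Lemma 1.1.  Put A := θ - τᵀτ and write τ⌟g := τ_j (e_j ⌟ g).
   1. The quadratic form of F_A is <h, F_A g> = Σ_{j,k} A_jk <e_k⌟h, e_j⌟g>; expanding
      A gives <g, F_θ g> = <g, F_A g> + |τ⌟g|².
   2. <g, F_A g> ≥ 0 for every p-form g.  The Gram matrices G_jk = <e_j⌟g, e_k⌟g> and
      W_jk = <ω^j∧g, ω^k∧g> are positive semi-definite, G + W = |g|² I by the
      anticommutation relation of ω^j∧ and e_k⌟, and tr G = p |g|².  Diagonalising A over
      R[i], tr (A G) = Σ d_i c_i with the eigenvalues d_i of A and weights
      0 ≤ c_i ≤ |g|², Σ c_i = p |g|²; such a sum is ≥ 0 when any p of the d_i have a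
      nonnegative sum.  Hence |τ⌟g|² ≤ <g, F_θ g>.
   3. By 2, F_θ X = 0 forces τ⌟X = 0 for the degree-p part of X, so the p-form τ∧ξ is
      orthogonal to ker F_θ and therefore lies in the image of the self-adjoint F_θ.
   4. <g, τ∧ξ> = <τ⌟g, ξ> ≤ |τ⌟g| |ξ| ≤ <g, F_θ g>^{1/2} |ξ| by Cauchy–Schwarz. *)

Section ExteriorAlgebra.
Variables (R : rcfType) (n : nat).
Implicit Types (S : {set 'I_n}) (j k : 'I_n) (f g h : extform R n).
Local Notation sgn := (@sgn_before R n).

Lemma sgn_before_sqr S k : sgn S k * sgn S k = 1.
Proof. by rewrite /sgn_before -exprD addnn -mul2n exprM sqrrN !expr1n. Qed.

Lemma sgn_before_setU1 S j k : j \notin S ->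
  sgn (j |: S) k = (-1) ^+ (j < k)%N * sgn S k.
Proof.
move=> jS; rewrite /sgn_before -exprD; congr (_ ^+ _).
case: (ltnP j k) => hjk.
  have -> : [set i in j |: S | (i < k)%N] = j |: [set i in S | (i < k)%N].
    by apply/setP => i; rewrite !inE; case: (eqVneq i j) => [->|].
  by rewrite cardsU1 inE (negbTE jS).
rewrite add0n; apply: eq_card => i; rewrite !inE; case: (eqVneq i j) => [->|] //=.
by rewrite (negbTE jS) ltnNge hjk.
Qed.

Lemma sgn_before_setD1 S j k : j \in S ->
  sgn S k = (-1) ^+ (j < k)%N * sgn (S :\ j) k.
Proof. by move=> jS; rewrite -{1}(setD1K jS) sgn_before_setU1 // setD11. Qed.

Lemma sgn_before_setU1_self S k : sgn (k |: S) k = sgn S k.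
Proof.
rewrite /sgn_before; congr (_ ^+ _); apply: eq_card => i; rewrite !inE.
by case: (eqVneq i k) => [->|] //=; rewrite ltnn !andbF.
Qed.

Lemma sgn_before_setD1_self S k : sgn (S :\ k) k = sgn S k.
Proof.
rewrite /sgn_before; congr (_ ^+ _); apply: eq_card => i; rewrite !inE.
by case: (eqVneq i k) => [->|] //=; rewrite ltnn !andbF.
Qed.

Lemma inner_sym f g : inner f g = inner g f.
Proof. by apply: eq_bigr => S _; rewrite mulrC. Qed.

(* Toggling k is the bijection of index sets matching ω^k ∧ · with e_k ⌟ ·. *)
Definition toggle k S := if k \in S then S :\ k else k |: S.

Lemma toggleK k : involutive (toggle k).
Proof.
move=> S; rewrite /toggle; case: (boolP (k \in S)) => kS.
  by rewrite setD11 setD1K.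
by rewrite setU11 setU1K.
Qed.

Lemma inner_wedge1 k g h : inner (wedge1 k g) h = inner g (interior k h).
Proof.
rewrite /inner (reindex_inj (inv_inj (toggleK k))) /=.
apply: eq_bigr => S _; rewrite !ffunE /toggle.
case: (boolP (k \in S)) => kS; first by rewrite setD11 !mul0r mulr0.
by rewrite setU11 setU1K // sgn_before_setU1_self mulrCA mulrA.
Qed.

Lemma inner_wedge1r k g h : inner h (wedge1 k g) = inner (interior k h) g.
Proof. by rewrite inner_sym inner_wedge1 inner_sym. Qed.

Lemma wedge1_interior_anticomm j k g S :
  wedge1 k (interior j g) S + interior j (wedge1 k g) S = if j == k then g S else 0.
Proof.
rewrite !ffunE; case: (eqVneq j k) => [<-|jk].
  case: (boolP (j \in S)) => jS.
    by rewrite setD11 setD1K // sgn_before_setD1_self mulrA sgn_before_sqr mul1r addr0.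
  by rewrite setU11 setU1K // sgn_before_setU1_self mulrA sgn_before_sqr mul1r add0r.
rewrite in_setD1 in_setU1 (negbTE jk) /= (eq_sym k j) (negbTE jk) /=.
case: (boolP (k \in S)) => kS /=; last by rewrite mulr0 if_same add0r.
case: (boolP (j \in S)) => jS /=; first by rewrite mulr0 addr0.
have -> : (j |: S) :\ k = j |: (S :\ k).
  by apply/setP => i; rewrite !inE; case: (eqVneq i j) => [->|] //=; rewrite jk.
rewrite (sgn_before_setD1 j kS) (sgn_before_setU1 k jS).
have opp_signs : (-1) ^+ (k < j)%N * (-1) ^+ (j < k)%N = -1 :> R.
  case: (ltngtP k j) => kj; rewrite ?mulr1 ?mul1r //.
  by rewrite (val_inj kj) eqxx in jk.
set a := sgn S k; set b := sgn (S :\ k) j; set x := g _.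
transitivity (a * b * x * (1 + (-1) ^+ (k < j)%N * (-1) ^+ (j < k)%N)); first by ring.
by rewrite opp_signs subrr mulr0.
Qed.

Lemma wedge1_interior_self k g S :
  wedge1 k (interior k g) S = if k \in S then g S else 0.
Proof.
rewrite !ffunE; case: ifP => kS //.
by rewrite setD11 setD1K // sgn_before_setD1_self mulrA sgn_before_sqr mul1r.
Qed.

Definition contract (tau : 'rV[R]_n) g : extform R n :=
  [ffun S => \sum_(j < n) tau 0 j * interior j g S].

Lemma inner_wedge_tau tau h g : inner h (wedge_tau tau g) = inner (contract tau h) g.
Proof.
rewrite /inner; under eq_bigr do rewrite ffunE big_distrr.
rewrite exchange_big; under [RHS]eq_bigr do rewrite ffunE big_distrl.
rewrite [RHS]exchange_big; apply: eq_bigr => k _.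
transitivity (tau 0 k * inner h (wedge1 k g)).
  by rewrite /inner big_distrr; apply: eq_bigr => S _ /=; rewrite mulrCA.
by rewrite inner_wedge1r /inner big_distrr; apply: eq_bigr => S _ /=; rewrite mulrA.
Qed.

Lemma inner_Ftheta (A : 'M[R]_n) h g :
  inner h (Ftheta A g) =
  \sum_(j < n) \sum_(k < n) A j k * inner (interior k h) (interior j g).
Proof.
rewrite /inner; under eq_bigr do rewrite ffunE big_distrr.
rewrite exchange_big; apply: eq_bigr => j _.
under eq_bigr do rewrite big_distrr.
rewrite exchange_big; apply: eq_bigr => k _.
transitivity (A j k * inner h (wedge1 k (interior j g))).
  by rewrite /inner big_distrr; apply: eq_bigr => S _ /=; rewrite mulrCA.
by rewrite inner_wedge1r.
Qed.

Lemma Ftheta_selfadj (A : 'M[R]_n) h g :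
  A^T = A -> inner h (Ftheta A g) = inner (Ftheta A h) g.
Proof.
move=> symA; rewrite [RHS]inner_sym !inner_Ftheta [RHS]exchange_big.
by apply: eq_bigr => j _; apply: eq_bigr => k _; rewrite -{2}symA mxE inner_sym.
Qed.

Lemma inner_contract tau g :
  inner (contract tau g) (contract tau g) =
  \sum_(j < n) \sum_(k < n) (tau 0 j * tau 0 k) * inner (interior k g) (interior j g).
Proof.
rewrite /inner; under eq_bigr do rewrite !ffunE big_distrl.
rewrite exchange_big; apply: eq_bigr => j _.
under eq_bigr do rewrite big_distrr.
rewrite exchange_big; apply: eq_bigr => k _.
by rewrite big_distrr; apply: eq_bigr => S _ /=; ring.
Qed.

Lemma inner_Ftheta_rank1 (A : 'M[R]_n) tau g :
  inner g (Ftheta A g) =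
  inner g (Ftheta (A - tau^T *m tau) g) + inner (contract tau g) (contract tau g).
Proof.
rewrite !inner_Ftheta inner_contract -big_split; apply: eq_bigr => j _.
rewrite -big_split; apply: eq_bigr => k _.
by rewrite !mxE big_ord1 !mxE /=; ring.
Qed.

Lemma interior_wedge1_gram j k g :
  inner (interior k g) (interior j g) + inner (wedge1 j g) (wedge1 k g) =
  (j == k)%:R * inner g g.
Proof.
rewrite -inner_wedge1r inner_wedge1 /inner -big_split /= mulr_sumr.
apply: eq_bigr => S _; rewrite -mulrDr wedge1_interior_anticomm.
by case: eqP; rewrite ?mul1r ?mul0r ?mulr0.
Qed.

Lemma sum_interior_gram p g : is_pform p g ->
  \sum_(k < n) inner (interior k g) (interior k g) = p%:R * inner g g.
Proof.
move=> pg; under eq_bigr do rewrite -inner_wedge1r.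
rewrite /inner exchange_big mulr_sumr; apply: eq_bigr => S _.
under eq_bigr do rewrite wedge1_interior_self.
rewrite -mulr_sumr -big_mkcond /= sumr_const.
case: (eqVneq #|S| p) => [->|Sp]; first by rewrite mulrnAr -mulr_natl.
by rewrite pg // !mul0r mulr0.
Qed.

End ExteriorAlgebra.

Section Degree.
Variables (R : rcfType) (n : nat).
Implicit Types (S : {set 'I_n}) (j k : 'I_n) (f g X xi : extform R n) (tau : 'rV[R]_n).

Definition proj_deg (p : nat) g : extform R n :=
  [ffun S : {set 'I_n} => if #|S| == p then g S else 0].

Lemma proj_deg_id p g : is_pform p g -> proj_deg p g = g.
Proof.
by move=> pg; apply/ffunP => S; rewrite ffunE; case: eqP => // /eqP Sp; rewrite pg.
Qed.

Lemma proj_deg_pform p g : is_pform p (proj_deg p g).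
Proof. by move=> S /negbTE Sp; rewrite ffunE Sp. Qed.

Lemma inner_proj_deg p f X : is_pform p f -> inner f X = inner f (proj_deg p X).
Proof.
move=> pf; apply: eq_bigr => S _; rewrite [proj_deg p X S]ffunE.
by case: ifP => [_ //|/negbT Sp]; rewrite pf // !mul0r.
Qed.

(* ω^k ∧ (e_j ⌟ ·) preserves the degree, hence commutes with the projection. *)
Lemma wedge1_interior_proj_deg p j k g S :
  wedge1 k (interior j (proj_deg p g)) S =
  if #|S| == p then wedge1 k (interior j g) S else 0.
Proof.
rewrite !ffunE; case: (boolP (k \in S)) => kS; last by rewrite if_same.
case: (boolP (j \in S :\ k)) => jS; first by rewrite mulr0 if_same.
have -> : #|j |: S :\ k| = #|S| by rewrite cardsU1 jS (cardsD1 k S) kS.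
by case: ifP; rewrite ?mulr0.
Qed.

Lemma Ftheta_proj_deg p (A : 'M[R]_n) g :
  Ftheta A (proj_deg p g) = proj_deg p (Ftheta A g).
Proof.
apply/ffunP => S; rewrite !ffunE.
under eq_bigr do under eq_bigr do rewrite wedge1_interior_proj_deg.
case: ifP => _ //.
by rewrite big1 // => j _; rewrite big1 // => k _; rewrite mulr0.
Qed.

Lemma wedge_tau_pform p tau xi : (1 <= p)%N -> is_pform p.-1 xi ->
  is_pform p (wedge_tau tau xi).
Proof.
move=> p_gt0 pxi S Sp; rewrite ffunE big1 // => k _; rewrite ffunE.
case: ifP => kS; last by rewrite mulr0.
rewrite pxi ?mulr0 //; move: Sp; rewrite (cardsD1 k S) kS.
by apply: contra => /eqP ->; rewrite add1n prednK.
Qed.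

End Degree.

Section InnerProduct.
Variables (R : rcfType) (n : nat).
Implicit Types (f g u v : extform R n).

Lemma inner_ge0 u : 0 <= inner u u.
Proof. by apply: sumr_ge0 => S _; rewrite -expr2 sqr_ge0. Qed.

Lemma inner_self_eq0 u : inner u u = 0 -> forall S, u S = 0.
Proof.
move=> u0 S; have sq_ge0 T : true -> 0 <= u T * u T by rewrite -expr2 sqr_ge0.
by have /eqP := @psumr_eq0P _ _ _ _ sq_ge0 u0 S isT; rewrite mulf_eq0 orbb => /eqP.
Qed.

(* Squared Cauchy–Schwarz: w := a v - c u has |w|² = a (a b - c²) ≥ 0, where a = |u|²,
   b = |v|², c = <u, v>. *)
Lemma inner_cauchy_schwarz_sqr u v : inner u v ^+ 2 <= inner u u * inner v v.
Proof.
set a := inner u u; set b := inner v v; set c := inner u v.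
have a_ge0 : 0 <= a := inner_ge0 u.
have [a0|a_neq0] := eqVneq a 0.
  have -> : c = 0 by rewrite /c /inner big1 // => S _; rewrite (inner_self_eq0 a0) mul0r.
  by rewrite expr0n /= a0 mul0r.
pose w : extform R n := [ffun S => a * v S - c * u S].
have w_expand : inner w w = a * (a * b - c ^+ 2).
  rewrite /inner; under eq_bigr do rewrite ffunE.
  transitivity (\sum_S (a ^+ 2 * (v S * v S) - (2 * a * c) * (u S * v S)
                        + c ^+ 2 * (u S * u S))).
    by apply: eq_bigr => S _; ring.
  rewrite big_split /= sumrB -!mulr_sumr.
  rewrite -[\sum_i v i * v i]/b -[\sum_i u i * v i]/c -[\sum_i u i * u i]/a; ring.
have := inner_ge0 w; rewrite w_expand pmulr_rge0 ?subr_ge0 //.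
by rewrite lt_def a_neq0 a_ge0.
Qed.

Lemma inner_cauchy_schwarz u v :
  inner u v <= Num.sqrt (inner u u) * Num.sqrt (inner v v).
Proof.
rewrite -sqrtrM ?inner_ge0 // (le_trans (ler_norm _)) // -sqrtr_sqr ler_sqrt.
  exact: inner_cauchy_schwarz_sqr.
by rewrite mulr_ge0 ?inner_ge0.
Qed.

End InnerProduct.

Section WeightedSum.
Variables (R : rcfType) (n : nat) (d : 'I_n -> R).

Lemma argmin_in_set (S : {set 'I_n}) : S != set0 ->
  exists2 j, j \in S & forall k, k \in S -> d j <= d k.
Proof.
case/set0Pn => i0 Si0; case: (arg_minP d Si0) => j Sj j_min.
by exists j => // k Sk; apply: j_min.
Qed.

Lemma lowest_values p : (0 < n)%N -> (p <= n)%N ->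
  exists I : {set 'I_n}, exists mu : R,
    [/\ #|I| = p, (forall i, i \in I -> d i <= mu) & (forall j, j \notin I -> mu <= d j)].
Proof.
move=> n_gt0; elim: p => [_|p IH lt_pn].
  have [j _ j_min] : exists2 j, j \in [set: 'I_n] & forall k, k \in setT -> d j <= d k.
    by apply: argmin_in_set; apply/set0Pn; exists (Ordinal n_gt0); rewrite inE.
  by exists set0, (d j); split=> [|i|k _]; rewrite ?cards0 ?inE //; apply: j_min.
have [I [mu [cardI dI dIC]]] := IH (ltnW lt_pn).
have : ~: I != set0.
  apply: contraTneq lt_pn => IC0.
  have := cardsC I; rewrite IC0 cards0 addn0 card_ord => <-.
  by rewrite cardI ltnn.
case/argmin_in_set => j; rewrite inE => jI j_min.
exists (j |: I), (d j); split.
- by rewrite cardsU1 jI cardI.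
- move=> i; rewrite in_setU1 => /orP [/eqP -> //|iI].
  exact: le_trans (dI _ iI) (dIC _ jI).
- by move=> k; rewrite in_setU1 negb_or => /andP [_ kI]; apply: j_min; rewrite inE.
Qed.

Lemma weighted_sum_ge0 (c : 'I_n -> R) (M : R) p : (1 <= p)%N -> (p <= n)%N ->
  (forall i, 0 <= c i <= M) -> \sum_i c i = p%:R * M ->
  (forall I : {set 'I_n}, #|I| = p -> 0 <= \sum_(i in I) d i) ->
  0 <= \sum_i d i * c i.
Proof.
move=> p_gt0 p_le_n c_bnd c_sum d_psd.
have [I [mu [cardI dI dIC]]] := lowest_values (leq_trans p_gt0 p_le_n) p_le_n.
have M_ge0 : 0 <= M.
  by case/andP: (c_bnd (Ordinal (leq_trans p_gt0 p_le_n))); apply: le_trans.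
have termwise i : mu * c i + (if i \in I then (d i - mu) * M else 0) <= d i * c i.
  case/andP: (c_bnd i) => c_ge0 c_leM.
  by case: ifPn => iI; [have := dI _ iI | have := dIC _ iI]; nra.
apply: le_trans (ler_sum _ (fun i _ => termwise i)).
rewrite big_split /= -mulr_sumr c_sum -big_mkcond /= -mulr_suml sumrB sumr_const cardI.
have := d_psd I cardI; rewrite -mulr_natl; nra.
Qed.

End WeightedSum.

Lemma char_poly_conj (F : fieldType) m (P B : 'M[F]_m) : P \in unitmx ->
  char_poly (invmx P *m B *m P) = char_poly B.
Proof.
move=> P_unit; rewrite /char_poly /char_poly_mx.
have -> : 'X%:M - map_mx polyC (invmx P *m B *m P) =
          map_mx polyC (invmx P) *m ('X%:M - map_mx polyC B) *m map_mx polyC P.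
  rewrite mulmxBr mulmxBl !map_mxM; congr (_ - _).
  by rewrite mul_mx_scalar -scalemxAl -map_mxM mulVmx // map_mx1 scalemx1.
rewrite !det_mulmx !det_map_mx mulrC mulrA -rmorphM -det_mulmx mulmxV //.
by rewrite det1 rmorph1 mul1r.
Qed.

Section TraceInequality.
Variables (R : rcfType) (n : nat).
Local Notation C := (R[i]).
Local Notation rc := (real_complex R).

Definition gram (X : finType) (h : 'I_n -> X -> R) : 'M[R]_n :=
  \matrix_(j, k) \sum_(x : X) h j x * h k x.

(* Congruence by a complex matrix keeps the diagonal of a Gram matrix nonnegative:
   (P G P^* )_ii = Σ_x |Σ_j P_ij h_j(x)|². *)
Lemma gram_congr_diag_ge0 (X : finType) (P : 'M[C]_n) (h : 'I_n -> X -> R) i :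
  0 <= (P *m map_mx rc (gram h) *m (P ^t* )%sesqui) i i.
Proof.
suff -> : (P *m map_mx rc (gram h) *m (P ^t* )%sesqui) i i =
    \sum_x (\sum_j P i j * rc (h j x)) * Num.conj (\sum_k P i k * rc (h k x)).
  by apply: sumr_ge0 => x _; apply: mul_conjC_ge0.
rewrite mxE; under eq_bigr => k _ do rewrite !mxE.
under eq_bigr => k _ do under eq_bigr => j _ do rewrite !mxE.
transitivity (\sum_x \sum_k \sum_j (P i j * rc (h j x)) * (Num.conj (P i k) * rc (h k x))).
  under eq_bigr => k _ do rewrite big_distrl /=.
  under eq_bigr => k _ do under eq_bigr => j _ do rewrite rmorph_sum big_distrr big_distrl /=.
  under eq_bigr => k _ do rewrite exchange_big /=.
  rewrite exchange_big /=; apply: eq_bigr => x _; apply: eq_bigr => k _.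
  by apply: eq_bigr => j _; rewrite rmorphM /=; ring.
apply: eq_bigr => x _; rewrite rmorph_sum big_distrr /=; apply: eq_bigr => k _.
have conj_real (r : R) : Num.conj (rc r) = rc r by exact: conjc_real.
by rewrite big_distrl /=; apply: eq_bigr => j _; rewrite rmorphM /= conj_real.
Qed.

Lemma real_symmetric_spectral (A : 'M[R]_n) : A^T = A ->
  exists2 P : 'M[C]_n, P \is unitarymx &
  exists2 d : 'I_n -> R, eigenvalue_list A d &
    map_mx rc A = invmx P *m diag_mx (\row_i rc (d i)) *m P.
Proof.
move=> symA; set Ac := map_mx rc A.
have herm_Ac : Ac \is hermsymmx.
  apply: realsym_hermsym.
    apply/is_hermitianmxP; rewrite expr0 scale1r; apply/matrixP => i j.
    by rewrite !mxE /= -{1}symA mxE.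
  by apply/mxOverP => i j; rewrite mxE; apply/complex_realP; exists (A i j).
set P := spectralmx Ac; set D := spectral_diag Ac.
pose d i := complex.Re (D 0 i).
have Ac_diag : Ac = invmx P *m diag_mx (\row_i rc (d i)) *m P.
  have -> : \row_i rc (d i) = D.
    apply/rowP => i; rewrite mxE.
    exact/RRe_real/(mxOverP (hermitian_spectral_diag_real herm_Ac)).
  by apply/orthomx_spectralP; exact: hermitian_normalmx.
exists P; first exact: spectral_unitarymx.
exists d; last exact: Ac_diag.
apply: (@map_poly_inj _ _ rc).
rewrite map_char_poly -/Ac Ac_diag char_poly_conj ?spectral_unit //.
rewrite char_poly_trig ?diag_mx_is_trig // rmorph_prod; apply: eq_bigr => i _.
by rewrite rmorphB /= map_polyX map_polyC /= !mxE eqxx mulr1n.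
Qed.

(* Trace inequality: if A is p-positive semi-definite and the Gram matrices G, G' satisfy
   G + G' = M I and tr G = p M, then tr (A G) ≥ 0.  In an eigenbasis of A this is
   weighted_sum_ge0 with the weights c_i = (P G P^* )_ii, which lie in [0, M]. *)
Lemma gram_trace_ge0 (X : finType) (A : 'M[R]_n) (h h' : 'I_n -> X -> R) (M : R) p :
  p_psd p A -> (1 <= p)%N -> (p <= n)%N ->
  gram h + gram h' = M%:M -> \tr (gram h) = p%:R * M -> 0 <= \tr (A *m gram h).
Proof.
case=> symA psdA p_gt0 p_le_n gram_sum gram_tr.
have [P P_unitary [d eigA A_diag]] := real_symmetric_spectral symA.
pose congr_diag (G : 'M[R]_n) i := (P *m map_mx rc G *m (P ^t* )%sesqui) i i.
pose c i := complex.Re (congr_diag (gram h) i).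
have c_real i : congr_diag (gram h) i = rc (c i).
  exact/esym/RRe_real/ger0_real/gram_congr_diag_ge0.
have PP : (P ^t* )%sesqui *m P = 1%:M.
  by rewrite -(invmx_unitary P_unitary) mulVmx ?unitarymx_unit.
have c_bnd i : 0 <= c i <= M.
  have sum_M : congr_diag (gram h) i + congr_diag (gram h') i = rc M.
    transitivity ((P *m map_mx rc (gram h) *m (P ^t* )%sesqui +
                   P *m map_mx rc (gram h') *m (P ^t* )%sesqui) i i).
      by rewrite [RHS]mxE.
    rewrite -mulmxDl -mulmxDr -map_mxD gram_sum map_scalar_mx mul_mx_scalar.
    by rewrite -scalemxAl (unitarymxP P_unitary) !mxE eqxx mulr1n mulr1.
  rewrite -!lecR -c_real; apply/andP; split; first exact: gram_congr_diag_ge0.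
  by rewrite -sum_M lerDl; exact: gram_congr_diag_ge0.
have c_sum : \sum_i c i = p%:R * M.
  apply: complexI; rewrite rmorph_sum.
  transitivity (\sum_i congr_diag (gram h) i); first by apply: eq_bigr => i _; rewrite c_real.
  rewrite -[\sum_i _]/(\tr (P *m map_mx rc (gram h) *m (P ^t* )%sesqui)).
  by rewrite mxtrace_mulC mulmxA PP mul1mx trace_map_mx gram_tr.
have tr_AG : \tr (A *m gram h) = \sum_i d i * c i.
  apply: complexI; rewrite -trace_map_mx map_mxM A_diag -!mulmxA mxtrace_mulC -mulmxA.
  rewrite (invmx_unitary P_unitary) rmorph_sum /mxtrace; apply: eq_bigr => i _.
  by rewrite mul_diag_mx mxE -/(congr_diag (gram h) i) c_real mxE rmorphM.
rewrite tr_AG; apply: (weighted_sum_ge0 p_gt0 p_le_n c_bnd c_sum); exact: psdA.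
Qed.
End TraceInequality.

Lemma Ftheta_psd (R : rcfType) (n p : nat) (A : 'M[R]_n) (g : extform R n) :
  p_psd p A -> (1 <= p)%N -> (p <= n)%N -> is_pform p g -> 0 <= inner g (Ftheta A g).
Proof.
move=> psdA p_gt0 p_le_n pg.
pose G := gram (fun j S => interior j g S).
have -> : inner g (Ftheta A g) = \tr (A *m G).
  rewrite inner_Ftheta; apply: eq_bigr => j _; rewrite !mxE.
  by apply: eq_bigr => k _; rewrite !mxE.
apply: (gram_trace_ge0 (h' := fun j S => wedge1 j g S) (M := inner g g) psdA p_gt0 p_le_n).
  apply/matrixP => j k; rewrite !mxE.
  by have := interior_wedge1_gram j k g; rewrite inner_sym mulr_natl => <-.
by rewrite -(sum_interior_gram pg); apply: eq_bigr => k _; rewrite mxE.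
Qed.

Lemma sym_range_orth_ker (K : fieldType) m (B : 'M[K]_m) (v : 'rV_m) : B^T = B ->
  (forall x : 'rV_m, x *m B = 0 -> v *m x^T = 0) -> exists u, v = u *m B.
Proof.
move=> symB v_orth; apply/submxP; rewrite submxE; apply/eqP/matrixP => i l.
rewrite ord1 !mxE.
have coker_ker : (col l (cokermx B))^T *m B = 0.
  by rewrite -[X in _ *m X = 0]symB -trmx_mul colE mulmxA mulmx_coker mul0mx trmx0.
have := v_orth _ coker_ker; rewrite trmxK => /matrixP /(_ 0 0); rewrite !mxE => v_coker.
by rewrite -[RHS]v_coker; apply: eq_bigr => k _; rewrite !mxE.
Qed.

Section OperatorRange.
Variables (R : rcfType) (n : nat).
Local Notation form := (extform R n).
Local Notation N := #|{: {set 'I_n}}|.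

Definition vec (f : form) : 'rV[R]_N := \row_i f (enum_val i).
Definition unvec (u : 'rV[R]_N) : form := [ffun S => u 0 (enum_rank S)].
Definition basis_form (T : {set 'I_n}) : form := [ffun S => (S == T)%:R].
Definition Fmx (A : 'M[R]_n) : 'M[R]_N :=
  \matrix_(i, j) Ftheta A (basis_form (enum_val i)) (enum_val j).

Lemma vecK : cancel vec unvec.
Proof. by move=> f; apply/ffunP => S; rewrite ffunE mxE enum_rankK. Qed.

Lemma unvecK : cancel unvec vec.
Proof. by move=> u; apply/rowP => i; rewrite mxE ffunE enum_valK. Qed.

Lemma sum_enum_val (F : {set 'I_n} -> R) : \sum_T F T = \sum_(i < N) F (enum_val i).
Proof. by rewrite (reindex _ (onW_bij _ (enum_val_bij _))). Qed.

Lemma inner_vec (f g : form) : (vec f *m (vec g)^T) 0 0 = inner f g.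
Proof. by rewrite mxE /inner sum_enum_val; apply: eq_bigr => i _; rewrite !mxE. Qed.

Lemma inner_basis_form T (f : form) : inner (basis_form T) f = f T.
Proof.
rewrite /inner (bigD1 T) //= big1 => [|S ST]; first by rewrite ffunE eqxx mul1r addr0.
by rewrite ffunE (negbTE ST) mul0r.
Qed.

Lemma Ftheta_linear (A : 'M[R]_n) (g : form) S :
  Ftheta A g S = \sum_T g T * Ftheta A (basis_form T) S.
Proof.
have wi_linear j k : wedge1 k (interior j g) S =
                     \sum_T g T * wedge1 k (interior j (basis_form T)) S.
  rewrite !ffunE; under eq_bigr do rewrite !ffunE.
  case: (k \in S); last by rewrite big1 // => T _; rewrite mulr0.
  case: (j \in S :\ k); first by rewrite mulr0 big1 // => T _; rewrite !mulr0.
  rewrite (bigD1 (j |: S :\ k)) //= big1 => [|T T_neq]; first by rewrite eqxx addr0 /=; ring.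
  by rewrite eq_sym (negbTE T_neq) !mulr0.
rewrite ffunE; under eq_bigr do under eq_bigr do rewrite wi_linear.
under [RHS]eq_bigr do rewrite ffunE mulr_sumr.
rewrite [RHS]exchange_big; apply: eq_bigr => j _.
under [RHS]eq_bigr do rewrite mulr_sumr.
rewrite [RHS]exchange_big; apply: eq_bigr => k _.
by rewrite mulr_sumr; apply: eq_bigr => T _; ring.
Qed.

Lemma vec_Ftheta (A : 'M[R]_n) (g : form) : vec g *m Fmx A = vec (Ftheta A g).
Proof.
apply/rowP => j; rewrite !mxE Ftheta_linear sum_enum_val.
by apply: eq_bigr => i _; rewrite !mxE.
Qed.

Lemma Fmx_sym (A : 'M[R]_n) : A^T = A -> (Fmx A)^T = Fmx A.
Proof.
move=> symA; apply/matrixP => i j; rewrite !mxE.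
by rewrite -inner_basis_form Ftheta_selfadj // inner_sym inner_basis_form.
Qed.

Lemma Ftheta_range (A : 'M[R]_n) (f : form) : A^T = A ->
  (forall X : form, Ftheta A X = 0 -> inner f X = 0) -> exists g, Ftheta A g = f.
Proof.
move=> symA f_orth.
have [u f_u] : exists u, vec f = u *m Fmx A.
  apply: sym_range_orth_ker; first exact: Fmx_sym.
  move=> x x_ker; apply/matrixP => a b; rewrite !ord1 -(unvecK x) inner_vec mxE.
  apply: f_orth; rewrite -[Ftheta A _]vecK -vec_Ftheta unvecK x_ker.
  by apply/ffunP => S; rewrite !ffunE mxE.
by exists (unvec u); rewrite -[LHS]vecK -vec_Ftheta unvecK -f_u vecK.
Qed.

End OperatorRange.

Lemma le_sqr_of_le_sqrt_mul (R : rcfType) (x y : R) :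
  0 <= y -> x <= Num.sqrt x * y -> x <= y ^+ 2.
Proof.
move=> y_ge0 x_le; have [x_le0|x_gt0] := lerP x 0.
  by apply: le_trans x_le0 _; rewrite exprn_ge0.
have s_gt0 : 0 < Num.sqrt x by rewrite sqrtr_gt0.
have sqr_s : Num.sqrt x ^+ 2 = x by rewrite sqr_sqrtr // ltW.
have s_le_y : Num.sqrt x <= y by rewrite -(ler_pM2l s_gt0) -expr2 sqr_s.
by rewrite -sqr_s lerXn2r ?nnegrE ?(ltW s_gt0).
Qed.

Section Lemma1p1.
Variables (R : rcfType) (n p : nat) (theta : 'M[R]_n) (tau : 'rV[R]_n).
Hypotheses (p_gt0 : (1 <= p)%N) (p_le_n : (p <= n)%N) (sym_theta : theta^T = theta).
Hypothesis psd : p_psd p (theta - tau^T *m tau).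

Lemma contract_le_Ftheta (g : extform R n) : is_pform p g ->
  inner (contract tau g) (contract tau g) <= inner g (Ftheta theta g).
Proof.
by move=> pg; rewrite (inner_Ftheta_rank1 _ tau) lerDr (Ftheta_psd psd p_gt0 p_le_n pg).
Qed.

Lemma contract_ker (X : extform R n) : is_pform p X -> Ftheta theta X = 0 ->
  forall S, contract tau X S = 0.
Proof.
move=> pX FX0; apply: inner_self_eq0; apply/eqP; rewrite eq_le inner_ge0 andbT.
have inner_X0 : inner X 0 = 0 by rewrite /inner big1 // => S _; rewrite !ffunE mulr0.
by have := contract_le_Ftheta pX; rewrite FX0 inner_X0.
Qed.

Lemma wedge_tau_in_ImF (xi : extform R n) : is_pform p.-1 xi ->
  in_ImF p theta (wedge_tau tau xi).
Proof.
move=> pxi; have ptxi := wedge_tau_pform tau p_gt0 pxi; split => //.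
have [g0 F_g0] : exists g0, Ftheta theta g0 = wedge_tau tau xi.
  apply: Ftheta_range => // X FX0.
  rewrite (inner_proj_deg _ ptxi) inner_sym inner_wedge_tau /inner big1 // => S _.
  rewrite contract_ker ?mul0r //; first exact: proj_deg_pform.
  by rewrite Ftheta_proj_deg FX0; apply/ffunP => T; rewrite !ffunE if_same.
exists (proj_deg p g0); split; first exact: proj_deg_pform.
by rewrite Ftheta_proj_deg F_g0 proj_deg_id.
Qed.

Lemma wedge_tau_bound (xi g : extform R n) : is_pform p g ->
  inner g (wedge_tau tau xi) <= Num.sqrt (inner g (Ftheta theta g)) * fnorm xi.
Proof.
move=> pg; have contract_le := contract_le_Ftheta pg.
rewrite inner_wedge_tau /fnorm; apply: le_trans (inner_cauchy_schwarz _ _) _.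
rewrite ler_wpM2r ?sqrtr_ge0 // ler_sqrt //.
exact: le_trans (inner_ge0 _) contract_le.
Qed.

End Lemma1p1.

Theorem lemma1p1 (R : rcfType) (n p : nat) (theta : 'M[R]_n) (tau : 'rV[R]_n)
  (hp1 : (1 <= p)%N) (hpn : (p <= n)%N)
  (hsym : theta^T = theta)
  (hpsd : p_psd p (theta - tau^T *m tau)) :
  (forall xi : extform R n, is_pform p.-1 xi -> in_ImF p theta (wedge_tau tau xi))
  /\
  (forall xi : extform R n, is_pform p.-1 xi ->
   forall f : extform R n, in_ImF p theta f ->
   forall g : extform R n, in_ImF p theta g -> Ftheta theta g = f ->
     inner g (wedge_tau tau xi) <= Num.sqrt (inner g f) * fnorm xi)
  /\
  (forall xi : extform R n, is_pform p.-1 xi ->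
   forall g : extform R n, in_ImF p theta g -> Ftheta theta g = wedge_tau tau xi ->
     inner g (wedge_tau tau xi) <= fnorm xi ^+ 2).
Proof.
have bound := wedge_tau_bound hp1 hpn hpsd.
split; [|split].
- exact: wedge_tau_in_ImF hp1 hpn hsym hpsd.
- by move=> xi _ f _ g [pg _] <-; apply: bound.
- move=> xi _ g [pg _] F_g; apply: le_sqr_of_le_sqrt_mul; first exact: sqrtr_ge0.
  by have := bound xi g pg; rewrite F_g.
Qed.
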